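(* \begin{enumerate} \item The sets $[2,3],[2,4],[3,6],[3,7],[4,9],[4,10],[4,11]$ and $\{2,4\},\{2,5\},\{2,6\},\{2,3,5\},\{2,4,5\}$ all lie in $\mathcal L(C_2^5)$. \item For each integer $k\ge 2$, the sets $[2k,6k-4],[2k,6k-3],[2k,6k-2],[2k,6k-1]$ lie in $\mathcal L(C_2^5)$. \item For each integer $k\ge 1$, the sets $[2k+1,6k-2],[2k+1,6k-1],[2k+1,6k],[2k+1,6k+1]$ lie in $\mathcal L(C_2^5)$. \end{enumerate}
   Context: $C_2^r$ denotes an elementary abelian $2$-group of rank $r$; $[a,b]=\{x\in\mathbb Z:a\le x\le b\}$. For a subset $G_0$ of a finite abelian group $G$, a sequence over $G_0$ is an element of the free abelian monoid $\mathcal F(G_0)$ with basis $G_0$ (a finite unordered list of elements of $G_0$, repetitions allowed). $\mathcal B(G_0)$ is the monoid of zero-sum sequences over $G_0$ (including the empty sequence). An atom is a minimal zero-sum sequence, i.e. a nonempty zero-sum sequence that is not a product of two nonempty zero-sum sequences. For $B\in\mathcal B(G_0)$, $\mathsf L(B)=\{k\in\mathbb N_0: B \text{ is a product of } k \text{ atoms}\}$, and $\mathcal L(G_0)=\{\mathsf L(B):B\in\mathcal B(G_0)\}$; $\mathcal L(G)$ is the case $G_0=G$. *)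

From HB Require Import structures.
From mathcomp Require Import all_boot all_order all_algebra.
Set Implicit Arguments. Unset Strict Implicit. Unset Printing Implicit Defensive.
Import GRing.Theory.
Local Open Scope ring_scope.

(* Sequences over a finite abelian group G: the free abelian monoid F(G),
   represented by multiplicity functions G -> nat. *)
Definition fseq (G : finZmodType) := {ffun G -> nat}.

Definition seq_one (G : finZmodType) : fseq G := [ffun => 0%N].

Definition seq_mul (G : finZmodType) (A B : fseq G) : fseq G :=
  [ffun g => (A g + B g)%N].

Definition sigma (G : finZmodType) (S : fseq G) : G := \sum_(g : G) g *+ S g.

Definition zero_sum (G : finZmodType) (S : fseq G) : Prop := sigma S = 0.

Definition atom (G : finZmodType) (S : fseq G) : Prop :=
  [/\ zero_sum S, S <> seq_one G &
      ~ (exists A B : fseq G, [/\ zero_sum A, zero_sum B, A <> seq_one G,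
                                 B <> seq_one G & S = seq_mul A B])].

Definition in_length_set (G : finZmodType) (B : fseq G) (k : nat) : Prop :=
  exists s : seq (fseq G), [/\ size s = k, (forall A, A \in s -> atom A) &
     B = [ffun g => \sum_(A <- s) A g]%N].

Definition in_system_of_sets (G : finZmodType) (L : nat -> Prop) : Prop :=
  exists B : fseq G, zero_sum B /\ forall k, in_length_set B k <-> L k.

Definition C2_5 : finZmodType := 'rV['F_2]_5.

Definition Lset (L : nat -> Prop) : Prop := in_system_of_sets C2_5 L.

From mathcomp Require Import all_boot all_order all_algebra.
From mathcomp Require Import zify.
Import GRing.Theory.
Set Implicit Arguments. Unset Strict Implicit. Unset Printing Implicit Defensive.

(* Each set L of the statement is realized as L = L(B) for an explicit
   zero-sum sequence B over C_2^5, written as a list of integer codes (the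
   binary digits of a code are the coordinates of the vector).

   Over C_2^5,
   a sequence supported on a list ns of codes is described by its profile
   (multiplicity vector along ns); zero-sum is a parity condition on binary
   digits, so atoms can be recognized by a decision procedure on profiles.
   - Lengths k in L are realized by certificates: lists of k atoms whose
     concatenation is a permutation of B.
   - Conversely, a complete catalogue lists every atom over ns: the squares
     x^2 and finitely many squarefree atoms.  For intervals it suffices that
     these have length 2..6, so that any factorization of B into k atoms
     satisfies 2k <= |B| + v_0(B) and |B| + 5 v_0(B) <= 6k; for the other sets,
     the atom profiles of a factorization decompose the profile of B, and all
     such decompositions are enumerated.
   The families of parts 2 and 3 are 0^z P^j Y, where the base Y has lengths
   filling [a, a + w] and the pump P = U^2 (U an atom of length 6) has
   lengths 2 and 6. *)

Section GeneralFactorizations.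

Variable G : finZmodType.

Definition fseq_of (l : seq G) : fseq G := [ffun x => count_mem x l].
Definition len (A : fseq G) : nat := \sum_x A x.

Lemma sigma_mul (A B : fseq G) : sigma (seq_mul A B) = (sigma A + sigma B)%R.
Proof. by rewrite /sigma -big_split; apply: eq_bigr => x _; rewrite ffunE mulrnDr. Qed.

Lemma sigma_fseq_of (l : seq G) : sigma (fseq_of l) = (\sum_(x <- l) x)%R.
Proof.
elim: l => [|a l IH].
  by rewrite big_nil /sigma big1 // => x _; rewrite ffunE.
rewrite big_cons -IH /sigma.
have -> : (\sum_x (x *+ fseq_of (a :: l) x) = \sum_x (x *+ (x == a) + x *+ fseq_of l x))%R.
  by apply: eq_bigr => x _; rewrite !ffunE /= mulrnDr eq_sym.
rewrite big_split /= (bigD1 a) //= eqxx mulr1n big1 ?addr0 // => x /negbTE ->.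
by rewrite mulr0n.
Qed.

Lemma len_fseq_of (l : seq G) : len (fseq_of l) = size l.
Proof.
elim: l => [|a l IH]; first by rewrite /len big1 // => x _; rewrite ffunE.
have -> : len (fseq_of (a :: l)) = \sum_x ((x == a) + fseq_of l x).
  by apply: eq_bigr => x _; rewrite !ffunE /= eq_sym.
by rewrite big_split /= -/(len _) IH (bigD1 a) //= eqxx big1 // => x /negbTE ->.
Qed.

Lemma fseq_of_nil (l : seq G) : fseq_of l = seq_one G -> l = [::].
Proof.
case: l => // a l /(congr1 (fun f : fseq G => f a)); by rewrite !ffunE /= eqxx.
Qed.

Lemma atom_intro (A : fseq G) : zero_sum A -> A <> seq_one G ->
  (forall A1 : fseq G, (forall x, A1 x <= A x) -> zero_sum A1 -> A1 = seq_one G \/ A1 = A) ->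
  atom A.
Proof.
move=> zA nA minA; split => // -[A1 [A2 [z1 z2 n1 n2 eA]]].
have le1 x : A1 x <= A x by rewrite eA ffunE leq_addr.
case: (minA A1 le1 z1) => // E; apply: n2; apply/ffunP => x.
have /eqP := congr1 (fun f : fseq G => f x) eA.
by rewrite E !ffunE -{1}(addn0 (A x)) eqn_add2l => /eqP <-.
Qed.

Lemma atom_sub (A P : fseq G) : atom A -> zero_sum P -> P <> seq_one G ->
  (forall x, P x <= A x) -> A = P.
Proof.
move=> [zA nA nsplit] zP nP le.
pose R : fseq G := [ffun x => A x - P x].
have eA : A = seq_mul P R by apply/ffunP => x; rewrite !ffunE subnKC.
have zR : zero_sum R by move: zA; rewrite /zero_sum eA sigma_mul zP add0r.
case: (eqVneq R (seq_one G)) => [R1|nR].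
  by rewrite eA R1; apply/ffunP => x; rewrite !ffunE addn0.
by exfalso; apply: nsplit; exists P, R; split => //; apply/eqP.
Qed.

Lemma atom_sub_fseq_of (A : fseq G) (l : seq G) : atom A -> l <> [::] ->
  (\sum_(x <- l) x = 0)%R -> (forall x, count_mem x l <= A x) -> A = fseq_of l.
Proof.
move=> aA nl zl le; apply: atom_sub => //; first by rewrite /zero_sum sigma_fseq_of.
- by move/fseq_of_nil.
- by move=> x; rewrite ffunE.
Qed.

Definition prod_fseq (s : seq (fseq G)) : fseq G := [ffun g => \sum_(A <- s) A g].

Lemma prod_fseq_cons (A : fseq G) s : prod_fseq (A :: s) = seq_mul A (prod_fseq s).
Proof. by apply/ffunP => x; rewrite !ffunE big_cons. Qed.

Lemma prod_fseq_cat s1 s2 : prod_fseq (s1 ++ s2) = seq_mul (prod_fseq s1) (prod_fseq s2).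
Proof. by apply/ffunP => x; rewrite !ffunE big_cat. Qed.

Lemma sigma_prod_fseq s : sigma (prod_fseq s) = (\sum_(A <- s) sigma A)%R.
Proof.
elim: s => [|A s IH]; last by rewrite prod_fseq_cons sigma_mul IH big_cons.
by rewrite big_nil /sigma big1 // => x _; rewrite ffunE big_nil.
Qed.

Lemma len_prod_fseq s : len (prod_fseq s) = \sum_(A <- s) len A.
Proof. by rewrite /len exchange_big; apply: eq_bigr => x _; rewrite ffunE. Qed.

Lemma prod_fseq_ge s (A : fseq G) x : A \in s -> A x <= prod_fseq s x.
Proof. by move=> As; rewrite ffunE (big_rem A) //= leq_addr. Qed.

Lemma zero_sum_of_length (B : fseq G) k : in_length_set B k -> zero_sum B.
Proof.
case=> s [_ atoms ->]; rewrite /zero_sum -/(prod_fseq s) sigma_prod_fseq big_seq big1 //.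
by move=> A /atoms [].
Qed.

Lemma in_length_set_mul (A B : fseq G) k1 k2 :
  in_length_set A k1 -> in_length_set B k2 -> in_length_set (seq_mul A B) (k1 + k2).
Proof.
move=> [s1 [<- a1 ->]] [s2 [<- a2 ->]]; exists (s1 ++ s2); split.
- by rewrite size_cat.
- by move=> C; rewrite mem_cat => /orP[/a1|/a2].
- exact: esym (prod_fseq_cat s1 s2).
Qed.

Lemma fseq_of_cat (l1 l2 : seq G) : fseq_of (l1 ++ l2) = seq_mul (fseq_of l1) (fseq_of l2).
Proof. by apply/ffunP => x; rewrite !ffunE count_cat. Qed.

Lemma fseq_of_perm (l1 l2 : seq G) : perm_eq l1 l2 -> fseq_of l1 = fseq_of l2.
Proof. by move=> /permP p; apply/ffunP => x; rewrite !ffunE p. Qed.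

Lemma in_length_set_blocks (l : seq G) (sl : seq (seq G)) :
  (forall b, b \in sl -> atom (fseq_of b)) -> perm_eq l (flatten sl) ->
  in_length_set (fseq_of l) (size sl).
Proof.
move=> atoms /fseq_of_perm ->; exists (map fseq_of sl); split.
- by rewrite size_map.
- by move=> A /mapP [b /atoms ? ->].
elim: sl {atoms} => [|b sl IH]; first by apply/ffunP => x; rewrite !ffunE big_nil.
by rewrite /= fseq_of_cat IH; exact: esym (prod_fseq_cons _ _).
Qed.

Lemma in_length_set_rep (l : seq G) k n :
  in_length_set (fseq_of l) k -> in_length_set (fseq_of (flatten (nseq n l))) (n * k).
Proof.
move=> lk; elim: n => [|n IH].
  by apply: (@in_length_set_blocks [::] [::]).
by rewrite /= fseq_of_cat mulSn; apply: in_length_set_mul.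
Qed.

End GeneralFactorizations.

(* The integer n codes the vector of C_2^5 whose j-th coordinate is the j-th
   binary digit of n; two codes give the same vector iff they have the same
   five low digits. *)
Definition vec (n : nat) : C2_5 := (\row_(j < 5) (odd (n %/ 2 ^ j))%:R)%R.
Definition digits (n : nat) : seq bool := [seq odd (n %/ 2 ^ j) | j <- iota 0 5].

Lemma vec_coord n (i : 'I_1) (j : 'I_5) : vec n i j = ((odd (n %/ 2 ^ j))%:R)%R.
Proof. by rewrite mxE. Qed.

Lemma eq_vec m n : (vec m == vec n) = (digits m == digits n).
Proof.
apply/eqP/eqP => E.
  rewrite /digits; apply/eq_in_map => j; rewrite mem_iota => /andP[_ lt_j5].
  have := congr1 (fun x : C2_5 => x ord0 (Ordinal lt_j5)) E.
  by rewrite !vec_coord; case: odd; case: odd.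
apply/rowP => j; rewrite !vec_coord.
have := congr1 (nth false ^~ j) E.
by rewrite /digits !(nth_map 0) ?size_iota // !nth_iota // => ->.
Qed.

Lemma vec0 : vec 0 = 0%R.
Proof. by apply/rowP => j; rewrite !mxE div0n. Qed.

Lemma uniq_vec ns : uniq (map digits ns) -> uniq (map vec ns).
Proof.
elim: ns => //= n ns IH /andP[n_new /IH ->]; rewrite andbT.
by apply: contra n_new => /mapP [m mn /eqP]; rewrite eq_vec => /eqP ->; apply: map_f.
Qed.

Lemma F2_valD (a b : 'F_2) : nat_of_ord (a + b)%R = ((a + b) %% 2)%N.
Proof. by []. Qed.

Lemma F2_valMn (a : 'F_2) n : nat_of_ord (a *+ n)%R = ((a * n) %% 2)%N.
Proof.
elim: n => [|n IH]; first by rewrite mulr0n muln0.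
by rewrite mulrS F2_valD IH modnDmr mulnS.
Qed.

Lemma F2_val_sum (r : seq nat) (F : nat -> 'F_2) :
  nat_of_ord (\sum_(n <- r) F n)%R = ((\sum_(n <- r) nat_of_ord (F n)) %% 2)%N.
Proof.
elim: r => [|n r IH]; first by rewrite !big_nil.
by rewrite !big_cons F2_valD IH modnDmr.
Qed.

Lemma F2_eq0 (a : 'F_2) : (a = 0)%R <-> nat_of_ord a = 0.
Proof. by split => [->//|a0]; apply: val_inj. Qed.

Lemma addxx (x : C2_5) : (x + x = 0)%R.
Proof.
apply/rowP => j; rewrite !mxE; apply/F2_eq0; rewrite F2_valD.
by case: (x ord0 j) => [[|[|]]].
Qed.

Definition fseq_code (l : seq nat) : fseq C2_5 := fseq_of (map vec l).
Definition profile (ns : seq nat) (A : fseq C2_5) : seq nat := [seq A (vec n) | n <- ns].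
Definition supported (ns : seq nat) (A : fseq C2_5) : Prop :=
  forall x, x \notin map vec ns -> A x = 0.
Definition code_count (ns l : seq nat) : seq nat :=
  [seq count (fun m => digits m == digits n) l | n <- ns].

(* A profile w along ns has zero sum iff every binary digit position sees an
   even total. *)
Definition parity_ok (ns w : seq nat) : bool :=
  all (fun j => ~~ odd (sumn [seq p.1 * odd (p.2 %/ 2 ^ j) | p <- zip w ns])) (iota 0 5).

Lemma profile_code ns l : profile ns (fseq_code l) = code_count ns l.
Proof.
apply/eq_map => n; rewrite ffunE count_map; apply: eq_count => m /=.
by rewrite eq_vec.
Qed.

Lemma supported_code ns l : all (mem ns) l -> supported ns (fseq_code l).
Proof.
move=> /allP l_ns x x_ns; rewrite ffunE; apply/count_memPn; apply: contra x_ns.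
by case/mapP => m /l_ns m_ns ->; apply: map_f.
Qed.

Lemma supported_le ns (A A1 : fseq C2_5) :
  (forall x, A1 x <= A x) -> supported ns A -> supported ns A1.
Proof. by move=> le sA x /sA A0; move: (le x); rewrite A0 leqn0 => /eqP. Qed.

Lemma profile_one ns : profile ns (seq_one C2_5) = nseq (size ns) 0.
Proof. by elim: ns => //= n ns ->; rewrite ffunE. Qed.

Lemma supported_one ns : supported ns (seq_one C2_5).
Proof. by move=> x _; rewrite ffunE. Qed.

Lemma profile_inj ns (A A' : fseq C2_5) :
  supported ns A -> supported ns A' -> profile ns A = profile ns A' -> A = A'.
Proof.
move=> sA sA' E; apply/ffunP => x; case: (boolP (x \in map vec ns)); last first.
  by move=> x_ns; rewrite sA // sA'.
by case/mapP => n n_ns ->; have /eq_in_map := E; apply.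
Qed.

Lemma profile_le ns (A A1 : fseq C2_5) :
  (forall x, A1 x <= A x) -> all2 leq (profile ns A1) (profile ns A).
Proof. by move=> le; elim: ns => //= n ns ->; rewrite le. Qed.

Lemma sum_supported (R : nmodType) ns (F : C2_5 -> R) : uniq (map digits ns) ->
  (forall x, x \notin map vec ns -> F x = 0%R) ->
  (\sum_(x : C2_5) F x = \sum_(n <- ns) F (vec n))%R.
Proof.
move=> /uniq_vec u F0.
rewrite (_ : \sum_(n <- ns) _ = \sum_(x <- map vec ns) F x)%R; last by rewrite big_map.
rewrite [RHS]big_uniq // [RHS]big_mkcond /=.
by apply: eq_bigr => x _; case: ifP => // /negbT /F0.
Qed.

Lemma len_supported ns (A : fseq C2_5) :
  uniq (map digits ns) -> supported ns A -> len A = sumn (profile ns A).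
Proof.
by move=> u sA; rewrite /len (@sum_supported nat ns) // sumnE big_map.
Qed.

Lemma zero_sum_profile ns A : uniq (map digits ns) -> supported ns A ->
  zero_sum A <-> parity_ok ns (profile ns A).
Proof.
move=> u sA.
have sigmaE : sigma A = (\sum_(n <- ns) vec n *+ A (vec n))%R.
  by rewrite /sigma (@sum_supported _ ns) // => x /sA ->.
have sigma_coord (j : 'I_5) : nat_of_ord (sigma A ord0 j) =
     (sumn [seq p.1 * odd (p.2 %/ 2 ^ j) | p <- zip (profile ns A) ns] %% 2)%N.
  rewrite sigmaE summxE F2_val_sum /profile.
  have -> : zip [seq A (vec n) | n <- ns] ns = [seq (A (vec n), n) | n <- ns].
    by elim: ns {u sA sigmaE} => //= n ns ->.
  rewrite -map_comp sumnE big_map -modn_summ -[RHS]modn_summ; congr (_ %% 2)%N.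
  apply: eq_bigr => n _ /=; rewrite mulmxnE F2_valMn vec_coord.
  by case: odd; rewrite ?muln0 ?muln1 ?mul0n ?mul1n ?modn_mod.
split => [zA|/allP par].
  apply/allP => j; rewrite mem_iota add0n => /andP[_ lt_j5].
  have := sigma_coord (Ordinal lt_j5); rewrite zA mxE /= modn2.
  by case: odd.
apply/rowP => j; rewrite [RHS]mxE; apply/F2_eq0; rewrite sigma_coord.
by have := par j; rewrite mem_iota /= ltn_ord modn2 => /(_ isT) /negbTE ->.
Qed.

Fixpoint subvectors (v : seq nat) : seq (seq nat) :=
  if v is a :: v' then [seq i :: w | i <- iota 0 a.+1, w <- subvectors v'] else [:: [::]].

Lemma subvectorsP v w : all2 leq w v -> w \in subvectors v.
Proof.
elim: v w => [|a v IH] [|b w] // => /andP[le_ba le_wv].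
apply/flatten_mapP; exists b; first by rewrite mem_iota add0n ltnS.
by apply: map_f; apply: IH.
Qed.

Fixpoint vectors01 (n : nat) : seq (seq nat) :=
  if n is n'.+1 then [seq b :: w | b <- [:: 0; 1], w <- vectors01 n'] else [:: [::]].

Lemma vectors01P w : all (leq^~ 1) w -> w \in vectors01 (size w).
Proof.
elim: w => [|b w IH] // => /andP[le_b1 le_w1].
apply/flatten_mapP; exists b; first by case: b le_b1 => [|[|]].
by apply: map_f; apply: IH.
Qed.

Definition atom_code (ns l : seq nat) : bool :=
  let v := code_count ns l in
  [&& uniq (map digits ns), all (mem ns) l, v != nseq (size ns) 0, parity_ok ns v &
      all (fun w => ~~ parity_ok ns w || (w == nseq (size ns) 0) || (w == v)) (subvectors v)].

Lemma atom_codeP ns l : atom_code ns l -> atom (fseq_code l).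
Proof.
case/and5P => u l_ns nz par minimal; have sl := supported_code l_ns.
apply: atom_intro.
- by apply/(zero_sum_profile u sl); rewrite profile_code.
- by move=> l1; move: nz; rewrite -profile_code l1 profile_one eqxx.
move=> A1 le1 z1; have s1 := supported_le le1 sl.
have : profile ns A1 \in subvectors (code_count ns l).
  by rewrite -profile_code; apply/subvectorsP/profile_le.
move/allP: minimal => minimal /minimal; rewrite (zero_sum_profile u s1) in z1; rewrite z1 /=.
case/orP => /eqP E; [left|right].
  by apply: (profile_inj s1 (@supported_one ns)); rewrite E profile_one.
by apply: (profile_inj s1 sl); rewrite E profile_code.
Qed.

Definition square_profile (n i : nat) : seq nat := [seq 2 * (j == i) | j <- iota 0 n].
Definition catalogue (n : nat) (Vs : seq (seq nat)) : seq (seq nat) :=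
  [seq square_profile n i | i <- iota 0 n] ++ Vs.

Definition complete_catalogue (ns : seq nat) (Vs : seq (seq nat)) : bool :=
  [&& uniq (map digits ns), all (fun n => digits n != digits 0) ns &
      all (fun w => ~~ parity_ok ns w || (w == nseq (size ns) 0) || (w \in Vs))
          (vectors01 (size ns))].

(* Over an elementary 2-group an atom containing x twice is x^2, so an atom
   over ns is a square or squarefree; hence its profile is in the catalogue. *)
Lemma catalogueP ns Vs A : complete_catalogue ns Vs -> atom A -> supported ns A ->
  profile ns A \in catalogue (size ns) Vs.
Proof.
case/and3P => u _ complete aA sA; rewrite mem_cat.
case: (boolP [exists x, 1 < A x]) => [/existsP [x Ax2]|squarefree].
  have eA : A = fseq_of [:: x; x].
    apply: atom_sub_fseq_of => //; first by rewrite !big_cons big_nil addr0 addxx.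
    by move=> y /=; case: eqP => [<-|] //; rewrite addn0.
  have x_ns : x \in map vec ns by apply: contraLR Ax2 => /sA ->.
  pose i := index x (map vec ns).
  have lt_i : i < size ns by rewrite -(size_map vec) index_mem.
  have ex : x = vec (nth 0 ns i) by rewrite -(nth_map 0 0%R) // nth_index.
  apply/orP; left; apply/mapP; exists i; first by rewrite mem_iota.
  apply: (@eq_from_nth _ 0); first by rewrite /profile /square_profile !size_map size_iota.
  move=> j; rewrite /profile size_map => lt_j.
  rewrite eA (nth_map 0) // /square_profile (nth_map 0) ?size_iota // nth_iota // ffunE /=.
  rewrite ex -!(nth_map 0 0%R vec) // (nth_uniq 0%R) ?size_map ?uniq_vec //.
  by rewrite eq_sym; case: (j == i).
have le1 x : A x <= 1.
  by rewrite leqNgt; apply: contra squarefree => Ax2; apply/existsP; exists x.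
have : profile ns A \in vectors01 (size ns).
  by rewrite -(size_map (fun n => A (vec n))); apply/vectors01P/allP => a /mapP [n _ ->].
move/allP: complete => complete /complete.
case: aA => zA nA _; rewrite (zero_sum_profile u sA).1 //=.
case/orP => [/eqP E|->]; last by rewrite orbT.
by case: nA; apply: (profile_inj sA (@supported_one ns)); rewrite E profile_one.
Qed.

Lemma atom_zero (G : finZmodType) : atom (fseq_of [:: 0 : G]%R).
Proof.
apply: atom_intro.
- by rewrite /zero_sum sigma_fseq_of big_seq1.
- by move/fseq_of_nil.
move=> A1 le1 _.
have le1x x : A1 x <= (x == 0%R) by have := le1 x; rewrite ffunE /= addn0 eq_sym.
case: (posnP (A1 0%R)) => A10; [left|right]; apply/ffunP => x; rewrite !ffunE.
  by have := le1x x; case: (eqVneq x 0%R) => [->//|x0]; rewrite leqn0 => /eqP.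
rewrite /= addn0 eq_sym.
by have := le1x x; case: (eqVneq x 0%R) => [->|x0]; rewrite ?eqxx ?(negbTE x0) /=; lia.
Qed.

Lemma fseq_code_cat (l1 l2 : seq nat) :
  fseq_code (l1 ++ l2) = seq_mul (fseq_code l1) (fseq_code l2).
Proof. by rewrite /fseq_code map_cat fseq_of_cat. Qed.

Lemma fseq_code_zero (l : seq nat) : fseq_code l 0%R = count (fun m => digits m == digits 0) l.
Proof. by rewrite -vec0 ffunE count_map; apply: eq_count => m /=; rewrite eq_vec. Qed.

Definition certified (ns l : seq nat) (Fs : seq (seq (seq nat))) : bool :=
  all (fun sl => all (atom_code ns) sl && perm_eq l (flatten sl)) Fs.

Lemma certifiedP ns l Fs k : certified ns l Fs -> k \in map size Fs ->
  in_length_set (fseq_code l) k.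
Proof.
move=> /allP cert /mapP [sl /cert /andP [/allP atoms perm_l] ->].
rewrite -(size_map (map vec)); apply: in_length_set_blocks.
  by move=> b /mapP [c /atoms /atom_codeP ? ->].
by rewrite -map_flatten perm_map.
Qed.

Lemma in_length_set_zeros z : in_length_set (fseq_code (nseq z 0)) z.
Proof.
rewrite -(size_nseq z [:: vec 0]); apply: in_length_set_blocks.
  by move=> b /nseqP [-> _]; rewrite vec0; apply: atom_zero.
by rewrite map_nseq; elim: z => //= z IH; rewrite perm_cons.
Qed.

Lemma in_length_set_code_rep (l : seq nat) k n :
  in_length_set (fseq_code l) k -> in_length_set (fseq_code (flatten (nseq n l))) (n * k).
Proof. by rewrite /fseq_code map_flatten map_nseq; apply: in_length_set_rep. Qed.

Definition lengths_2_to_6 (Cat : seq (seq nat)) : bool := all (fun v => 2 <= sumn v <= 6) Cat.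

(* An atom over 0 :: ns is {0} or has length between 2 and 6; in both cases
   2 <= |A| + v_0(A) and |A| + 5 v_0(A) <= 6. *)
Lemma atom_length_bounds ns Vs A : complete_catalogue ns Vs ->
  lengths_2_to_6 (catalogue (size ns) Vs) -> atom A -> supported (0 :: ns) A ->
  2 <= len A + A 0%R /\ len A + 5 * A 0%R <= 6.
Proof.
move=> cat /allP sizes aA sA; case: (posnP (A 0%R)) => A0; last first.
  have -> : A = fseq_of [:: 0%R].
    apply: atom_sub_fseq_of => //; first by rewrite big_seq1.
    by move=> x /=; case: eqP => [<-|] //=; rewrite addn0.
  by rewrite len_fseq_of ffunE /= eqxx.
have sA' : supported ns A.
  move=> x x_ns; case: (eqVneq x 0%R) => [->//|x0]; apply: sA.
  by rewrite /= inE negb_or x_ns vec0 x0.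
have /sizes := catalogueP cat aA sA'; case/and3P: cat => u _ _.
by rewrite A0 -(len_supported u sA') muln0 !addn0 => /andP.
Qed.

Lemma length_bounds ns Vs (B : fseq C2_5) k : complete_catalogue ns Vs ->
  lengths_2_to_6 (catalogue (size ns) Vs) -> supported (0 :: ns) B ->
  in_length_set B k -> 2 * k <= len B + B 0%R /\ len B + 5 * B 0%R <= 6 * k.
Proof.
move=> cat sizes sB [s [<- atoms eB]].
have bounds A : A \in s -> 2 <= len A + A 0%R /\ len A + 5 * A 0%R <= 6.
  move=> As; apply: (atom_length_bounds cat sizes (atoms A As)).
  by apply: supported_le sB => x; rewrite eB; apply: prod_fseq_ge.
have lenB : len B = \sum_(A <- s) len A by rewrite eB len_prod_fseq.
have B0 : B 0%R = \sum_(A <- s) A 0%R by rewrite eB ffunE.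
rewrite -sum1_size lenB B0 !big_distrr -!big_split /= !big_seq.
by split; apply: leq_sum => A /bounds []; rewrite muln1.
Qed.

Lemma interval_system ns Vs (B : fseq C2_5) lo hi : complete_catalogue ns Vs ->
  lengths_2_to_6 (catalogue (size ns) Vs) -> supported (0 :: ns) B ->
  (forall k, 2 * k <= len B + B 0%R -> len B + 5 * B 0%R <= 6 * k -> lo <= k <= hi) ->
  (forall k, lo <= k <= hi -> in_length_set B k) -> lo <= hi ->
  Lset (fun k => lo <= k <= hi).
Proof.
move=> cat sizes sB forced realized le_lohi; exists B; split.
  by apply: (@zero_sum_of_length _ _ lo); apply: realized; rewrite leqnn le_lohi.
move=> k; split; last exact: realized.
by case/(length_bounds cat sizes sB); apply: forced.
Qed.

Lemma zero_padded ns Vs z (X : seq nat) : complete_catalogue ns Vs -> all (mem ns) X ->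
  let B := fseq_code (nseq z 0 ++ X) in
  [/\ supported (0 :: ns) B, len B = z + size X & B 0%R = z].
Proof.
case/and3P => _ /allP ns_nz _ /allP X_ns; split.
- apply/supported_code/allP => m; rewrite mem_cat.
  case/orP => [/nseqP [-> _]|mX]; first exact: mem_head.
  have m_ns : m \in ns := X_ns m mX.
  by change (m \in 0 :: ns); rewrite inE m_ns orbT.
- by rewrite len_fseq_of size_map size_cat size_nseq.
rewrite fseq_code_zero count_cat count_nseq eqxx mul1n.
rewrite (eq_in_count (a2 := pred0)) ?count_pred0 ?addn0 //.
by move=> m /X_ns /ns_nz /negbTE.
Qed.

(* A sharp base: Y has certified factorizations of every length in [a, a + w],
   and these are the extreme lengths allowed by length_bounds for 0^z Y,
   i.e. a = ceil(|Y|/6) and a + w = floor(|Y|/2). *)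
Definition sharp_base (ns Y : seq nat) (Fs : seq (seq (seq nat))) (a w : nat) : bool :=
  [&& certified ns Y Fs, map size Fs == iota a w.+1, all (mem ns) Y,
      6 * a < size Y + 6, size Y <= 6 * a, 2 * (a + w) <= size Y & size Y < 2 * (a + w) + 2].

Lemma sharp_base_lengths ns Y Fs a w k : sharp_base ns Y Fs a w -> a <= k <= a + w ->
  in_length_set (fseq_code Y) k.
Proof.
case/and3P => cert /eqP sizes _ range; apply: (certifiedP cert).
by rewrite sizes mem_iota; lia.
Qed.

Lemma shifted_family ns Vs Y Fs a w z : complete_catalogue ns Vs ->
  lengths_2_to_6 (catalogue (size ns) Vs) -> sharp_base ns Y Fs a w ->
  Lset (fun k => z + a <= k <= z + a + w).
Proof.
move=> cat sizes base; have /and4P [_ _ Y_ns /and4P [b1 b2 b3 b4]] := base.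
have [sB lenB B0] := zero_padded z cat Y_ns.
apply: (interval_system cat sizes sB); rewrite ?lenB ?B0; try lia.
move=> k range; rewrite fseq_code_cat -(subnKC (_ : z <= k)); last by lia.
by apply: in_length_set_mul; [exact: in_length_set_zeros | apply: sharp_base_lengths base _; lia].
Qed.

Definition pump (ns P : seq nat) (FP : seq (seq (seq nat))) : bool :=
  [&& certified ns P FP, 2 \in map size FP, 6 \in map size FP, size P == 12 & all (mem ns) P].

Lemma pumped_lengths ns P FP Y z j q k : pump ns P FP -> q <= j ->
  in_length_set (fseq_code Y) k ->
  in_length_set (fseq_code (nseq z 0 ++ flatten (nseq j P) ++ Y)) (z + (2 * (j - q) + 6 * q) + k).
Proof.
case/and5P => cert P2 P6 _ _ le_qj Yk.
have -> : nseq j P = nseq (j - q) P ++ nseq q P by rewrite -nseqD subnK.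
have -> : z + (2 * (j - q) + 6 * q) + k = z + ((j - q) * 2 + (q * 6 + k)) by lia.
rewrite flatten_cat -catA !fseq_code_cat.
apply: in_length_set_mul; first exact: in_length_set_zeros.
apply: in_length_set_mul; first exact/in_length_set_code_rep/(certifiedP cert).
by apply: in_length_set_mul; first exact/in_length_set_code_rep/(certifiedP cert).
Qed.

(* L(0^z P^j Y) = [z + 2j + a, z + 6j + a + w] for a pump P and a sharp base
   Y with w >= 3 (so that the steps of 4 from the pump leave no gap). *)
Lemma pumped_family ns Vs P FP Y Fs a w z j : complete_catalogue ns Vs ->
  lengths_2_to_6 (catalogue (size ns) Vs) -> pump ns P FP -> sharp_base ns Y Fs a w -> 3 <= w ->
  Lset (fun k => z + 2 * j + a <= k <= z + 6 * j + a + w).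
Proof.
move=> cat sizes pumpP base w3.
have /and5P [_ _ _ /eqP sizeP P_ns] := pumpP.
have /and4P [_ _ Y_ns /and4P [b1 b2 b3 b4]] := base.
have X_ns : all (mem ns) (flatten (nseq j P) ++ Y).
  by rewrite all_cat Y_ns andbT; apply/allP => m /flattenP [b /nseqP [-> _]] /(allP P_ns).
have [sB lenB B0] := zero_padded z cat X_ns.
have sizeX : size (flatten (nseq j P) ++ Y) = 12 * j + size Y.
  by rewrite size_cat size_flatten /shape map_nseq sumn_nseq sizeP mulnC.
apply: (interval_system cat sizes sB); rewrite ?lenB ?B0 ?sizeX; try lia.
move=> k range; pose q := minn j ((k - (z + 2 * j + a)) %/ 4).
have -> : k = z + (2 * (j - q) + 6 * q) + (a + (k - (z + 2 * j + a) - 4 * q)).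
  by rewrite /q; lia.
apply: pumped_lengths; [exact: pumpP | exact: geq_minl |].
by apply: sharp_base_lengths base _; rewrite /q; lia.
Qed.

(* Decompositions of a vector w as a sum of vectors from Vs (with repetition):
   lengths Vs w lists the possible numbers of summands, choosing for each v in
   Vs in turn how many copies c of v are used. *)
Definition fits (w v : seq nat) (c : nat) : bool :=
  all (fun i => c * nth 0 v i <= nth 0 w i) (iota 0 (size w)).
Definition vsub (w v : seq nat) (c : nat) : seq nat :=
  [seq nth 0 w i - c * nth 0 v i | i <- iota 0 (size w)].

Fixpoint lengths (Vs : seq (seq nat)) (w : seq nat) : seq nat :=
  if Vs is v :: Vs' then
    flatten [seq [seq c + l | l <- lengths Vs' (vsub w v c)] | c <- iota 0 (sumn w).+1 & fits w v c]
  else if all (eq_op^~ 0) w then [:: 0] else [::].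

Definition nonzero_on (n : nat) (v : seq nat) : bool := has (fun i => 0 < nth 0 v i) (iota 0 n).

Lemma nth_le_sumn (w : seq nat) i : nth 0 w i <= sumn w.
Proof.
elim: w i => [|a w IH] [|i] //=; first exact: leq_addr.
exact: leq_trans (IH i) (leq_addl _ _).
Qed.

Lemma sum_count_mem (T : eqType) (v : T) (ps : seq T) (f : T -> nat) :
  \sum_(p <- ps) f p = count_mem v ps * f v + \sum_(p <- filter (predC1 v) ps) f p.
Proof.
elim: ps => [|p ps IH]; first by rewrite !big_nil.
rewrite /= big_cons IH; case: (eqVneq p v) => [->|pv] /=.
  by rewrite mulnDl mul1n addnA.
by rewrite big_cons add0n addnCA.
Qed.

Lemma lengthsP (Vs ps : seq (seq nat)) (w : seq nat) :
  all (nonzero_on (size w)) Vs -> all (mem Vs) ps ->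
  (forall i, i < size w -> nth 0 w i = \sum_(p <- ps) nth 0 p i) ->
  size ps \in lengths Vs w.
Proof.
elim: Vs ps w => [|v Vs IH] ps w.
  case: ps => [_ _ w_sum|//]; rewrite /= (_ : all _ w) ?mem_seq1 //.
  by apply/(all_nthP 0) => i /w_sum ->; rewrite big_nil.
case/andP => v_nz Vs_nz ps_Vs w_sum.
pose c := count_mem v ps; pose ps' := filter (predC1 v) ps.
have w_sum' i : i < size w -> nth 0 w i = c * nth 0 v i + \sum_(p <- ps') nth 0 p i.
  by move/w_sum ->; rewrite (sum_count_mem v ps (fun p => nth 0 p i)).
have fit : fits w v c by apply/allP => i; rewrite mem_iota => /andP [_ /w_sum' ->]; apply: leq_addr.
have c_le : c <= sumn w.
  case/hasP: v_nz => i; rewrite mem_iota => /andP [_ lt_i] v_i.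
  apply: leq_trans (nth_le_sumn w i); rewrite (w_sum' i lt_i).
  by apply: leq_trans (leq_addr _ _); rewrite leq_pmulr.
have -> : size ps = c + size ps' by rewrite size_filter -(count_predC (pred1 v)).
apply/flatten_mapP; exists c; first by rewrite mem_filter fit mem_iota.
apply: map_f; apply: IH.
- by rewrite size_map size_iota.
- apply/allP => p; rewrite mem_filter => /andP [/= pv /(allP ps_Vs) p_in].
  by have : p \in v :: Vs := p_in; rewrite inE (negbTE pv).
- move=> i; rewrite size_map size_iota => lt_i.
  by rewrite (nth_map 0) ?size_iota // nth_iota // add0n (w_sum' i lt_i) addKn.
Qed.

Definition exact_data (ns : seq nat) (Vs : seq (seq nat)) (l : seq nat)
    (Fs : seq (seq (seq nat))) : bool :=
  [&& all (mem ns) l, certified ns l Fs, Fs != [::],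
      all (nonzero_on (size ns)) (catalogue (size ns) Vs) &
      all (mem (map size Fs)) (lengths (catalogue (size ns) Vs) (code_count ns l))].

(* Then L(l) is exactly the set of certified lengths: the profiles of the
   atoms of any factorization decompose the profile of l. *)
Lemma exact_system ns Vs (l : seq nat) Fs : complete_catalogue ns Vs ->
  exact_data ns Vs l Fs -> Lset (fun k => k \in map size Fs).
Proof.
move=> cat /and5P [l_ns cert Fs_nz cat_nz complete]; exists (fseq_code l); split.
  case: Fs Fs_nz cert {complete} => // sl Fs _ cert.
  by apply: (zero_sum_of_length (k := size sl)); apply: (certifiedP cert); rewrite inE eqxx.
move=> k; split; last exact: certifiedP cert.
case=> s [<- atoms eB]; rewrite -(size_map (profile ns)).
apply: (allP complete); apply: lengthsP.
- by rewrite size_map.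
- apply/allP => p /mapP [A As ->]; apply: (catalogueP cat (atoms A As)).
  by apply: supported_le (supported_code l_ns) => x; rewrite eB; apply: prod_fseq_ge.
move=> i; rewrite size_map => lt_i; rewrite -profile_code eB big_map.
by rewrite (nth_map 0) // ffunE; apply: eq_bigr => A _; rewrite (nth_map 0).
Qed.

Lemma Lset_equiv (P Q : nat -> Prop) : Lset P -> (forall k, P k <-> Q k) -> Lset Q.
Proof. by case=> B [zB LB] PQ; exists B; split => // k; rewrite LB PQ. Qed.

Lemma Lset_interval lo hi lo' hi' : lo = lo' -> hi = hi' ->
  Lset (fun k => lo <= k <= hi) -> Lset (fun k => lo' <= k <= hi').
Proof. by move=> <- <-. Qed.

(* Three supports in C_2^5, written in binary with e_j = 2^(j-1):
   SA = e1..e5, e1+e2, e1+e3, e2+e3+e4+e5;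
   SB = e1..e5, e1+e2+e3, e1+e2+e4, e1+e3+e5;
   SC = e1..e4, e1+e2, e1+e3, e2+e3+e4.
   VA, VB, VC are the profiles of their squarefree atoms. *)
Definition SA := [:: 1; 2; 4; 8; 16; 3; 5; 30].
Definition VA :=
  [:: [:: 1; 1; 0; 0; 0; 1; 0; 0]; [:: 1; 0; 1; 0; 0; 0; 1; 0]; [:: 0; 1; 1; 0; 0; 1; 1; 0]; [:: 0; 1; 1; 1; 1; 0; 0; 1]; [:: 1; 0; 1; 1; 1; 1; 0; 1]; [:: 1; 1; 0; 1; 1; 0; 1; 1]; [:: 0; 0; 0; 1; 1; 1; 1; 1]].
Definition SB := [:: 1; 2; 4; 8; 16; 7; 11; 21].
Definition VB :=
  [:: [:: 1; 1; 1; 0; 0; 1; 0; 0]; [:: 1; 1; 0; 1; 0; 0; 1; 0]; [:: 0; 0; 1; 1; 0; 1; 1; 0]; [:: 1; 0; 1; 0; 1; 0; 0; 1]; [:: 0; 1; 0; 0; 1; 1; 0; 1]; [:: 0; 1; 1; 1; 1; 0; 1; 1]; [:: 1; 0; 0; 1; 1; 1; 1; 1]].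
Definition SC := [:: 1; 2; 4; 8; 3; 5; 14].
Definition VC :=
  [:: [:: 1; 1; 0; 0; 1; 0; 0]; [:: 1; 0; 1; 0; 0; 1; 0]; [:: 0; 1; 1; 0; 1; 1; 0]; [:: 0; 1; 1; 1; 0; 0; 1]; [:: 1; 0; 1; 1; 1; 0; 1]; [:: 1; 1; 0; 1; 0; 1; 1]; [:: 0; 0; 0; 1; 1; 1; 1]].

Lemma catalogue_A : complete_catalogue SA VA. Proof. by vm_compute. Qed.
Lemma catalogue_B : complete_catalogue SB VB. Proof. by vm_compute. Qed.
Lemma catalogue_C : complete_catalogue SC VC. Proof. by vm_compute. Qed.
Lemma sizes_A : lengths_2_to_6 (catalogue (size SA) VA). Proof. by vm_compute. Qed.
Lemma sizes_C : lengths_2_to_6 (catalogue (size SC) VC). Proof. by vm_compute. Qed.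

Definition UA := [:: 1; 4; 8; 16; 3; 30].
Lemma pump_A : pump SA (UA ++ UA) [:: [:: UA; UA]; [seq [:: u; u] | u <- UA]].
Proof. by vm_compute. Qed.

Definition Y7 := [:: 1; 2; 4; 4; 3; 5; 5].
Definition F7 :=
  [:: [:: [:: 1; 4; 5]; [:: 2; 4; 3; 5]];
   [:: [:: 4; 4]; [:: 5; 5]; [:: 1; 2; 3]]].
Lemma base7 : sharp_base SA Y7 F7 2 1. Proof. by vm_compute. Qed.

Definition Y13 := [:: 1; 2; 4; 4; 8; 8; 3; 3; 3; 5; 5; 14; 14].
Definition F13 :=
  [:: [:: [:: 2; 4; 3; 5]; [:: 8; 3; 5; 14]; [:: 1; 4; 8; 3; 14]];
   [:: [:: 3; 3]; [:: 1; 4; 5]; [:: 2; 4; 8; 14]; [:: 8; 3; 5; 14]];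
   [:: [:: 8; 8]; [:: 3; 3]; [:: 14; 14]; [:: 1; 4; 5]; [:: 2; 4; 3; 5]];
   [:: [:: 4; 4]; [:: 8; 8]; [:: 3; 3]; [:: 5; 5]; [:: 14; 14]; [:: 1; 2; 3]]].
Lemma base13 : sharp_base SC Y13 F13 3 3. Proof. by vm_compute. Qed.

Definition Y14 := [:: 1; 1; 2; 2; 4; 4; 8; 8; 3; 3; 5; 5; 14; 14].
Definition F14 :=
  [:: [:: [:: 2; 4; 3; 5]; [:: 1; 2; 8; 5; 14]; [:: 1; 4; 8; 3; 14]];
   [:: [:: 1; 2; 3]; [:: 1; 4; 5]; [:: 2; 4; 8; 14]; [:: 8; 3; 5; 14]];
   [:: [:: 8; 8]; [:: 14; 14]; [:: 1; 2; 3]; [:: 1; 4; 5]; [:: 2; 4; 3; 5]];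
   [:: [:: 4; 4]; [:: 8; 8]; [:: 5; 5]; [:: 14; 14]; [:: 1; 2; 3]; [:: 1; 2; 3]];
   [:: [:: 1; 1]; [:: 2; 2]; [:: 4; 4]; [:: 8; 8]; [:: 3; 3]; [:: 5; 5]; [:: 14; 14]]].
Lemma base14 : sharp_base SC Y14 F14 3 4. Proof. by vm_compute. Qed.

Definition Y16 := [:: 1; 1; 2; 2; 4; 4; 8; 8; 16; 16; 3; 3; 5; 5; 30; 30].
Definition F16 :=
  [:: [:: [:: 2; 4; 3; 5]; [:: 1; 2; 8; 16; 5; 30]; [:: 1; 4; 8; 16; 3; 30]];
   [:: [:: 1; 2; 3]; [:: 1; 4; 5]; [:: 2; 4; 8; 16; 30]; [:: 8; 16; 3; 5; 30]];
   [:: [:: 1; 1]; [:: 3; 3]; [:: 5; 5]; [:: 2; 4; 8; 16; 30]; [:: 2; 4; 8; 16; 30]];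
   [:: [:: 8; 8]; [:: 16; 16]; [:: 30; 30]; [:: 1; 2; 3]; [:: 1; 4; 5]; [:: 2; 4; 3; 5]];
   [:: [:: 4; 4]; [:: 8; 8]; [:: 16; 16]; [:: 5; 5]; [:: 30; 30]; [:: 1; 2; 3]; [:: 1; 2; 3]];
   [:: [:: 1; 1]; [:: 2; 2]; [:: 4; 4]; [:: 8; 8]; [:: 16; 16]; [:: 3; 3]; [:: 5; 5]; [:: 30; 30]]].
Lemma base16 : sharp_base SA Y16 F16 3 5. Proof. by vm_compute. Qed.

Definition Y19 := [:: 1; 1; 1; 2; 2; 4; 4; 4; 8; 8; 16; 16; 3; 3; 5; 5; 5; 30; 30].
Definition F19 :=
  [:: [:: [:: 1; 4; 5]; [:: 2; 4; 3; 5]; [:: 1; 2; 8; 16; 5; 30]; [:: 1; 4; 8; 16; 3; 30]];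
   [:: [:: 1; 2; 3]; [:: 1; 4; 5]; [:: 1; 4; 5]; [:: 2; 4; 8; 16; 30]; [:: 8; 16; 3; 5; 30]];
   [:: [:: 1; 1]; [:: 3; 3]; [:: 5; 5]; [:: 1; 4; 5]; [:: 2; 4; 8; 16; 30]; [:: 2; 4; 8; 16; 30]];
   [:: [:: 8; 8]; [:: 16; 16]; [:: 30; 30]; [:: 1; 2; 3]; [:: 1; 4; 5]; [:: 1; 4; 5]; [:: 2; 4; 3; 5]];
   [:: [:: 4; 4]; [:: 8; 8]; [:: 16; 16]; [:: 5; 5]; [:: 30; 30]; [:: 1; 2; 3]; [:: 1; 2; 3]; [:: 1; 4; 5]];
   [:: [:: 1; 1]; [:: 2; 2]; [:: 4; 4]; [:: 8; 8]; [:: 16; 16]; [:: 3; 3]; [:: 5; 5]; [:: 30; 30]; [:: 1; 4; 5]]].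
Lemma base19 : sharp_base SA Y19 F19 4 5. Proof. by vm_compute. Qed.

Definition Y20 := [:: 1; 1; 2; 2; 4; 4; 4; 4; 8; 8; 16; 16; 3; 3; 3; 3; 5; 5; 30; 30].
Definition F20 :=
  [:: [:: [:: 2; 4; 3; 5]; [:: 2; 4; 3; 5]; [:: 1; 4; 8; 16; 3; 30]; [:: 1; 4; 8; 16; 3; 30]];
   [:: [:: 3; 3]; [:: 1; 4; 5]; [:: 2; 4; 3; 5]; [:: 2; 4; 8; 16; 30]; [:: 1; 4; 8; 16; 3; 30]];
   [:: [:: 3; 3]; [:: 3; 3]; [:: 1; 4; 5]; [:: 1; 4; 5]; [:: 2; 4; 8; 16; 30]; [:: 2; 4; 8; 16; 30]];
   [:: [:: 1; 1]; [:: 4; 4]; [:: 3; 3]; [:: 3; 3]; [:: 5; 5]; [:: 2; 4; 8; 16; 30]; [:: 2; 4; 8; 16; 30]];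
   [:: [:: 4; 4]; [:: 8; 8]; [:: 16; 16]; [:: 3; 3]; [:: 30; 30]; [:: 1; 2; 3]; [:: 1; 4; 5]; [:: 2; 4; 3; 5]];
   [:: [:: 4; 4]; [:: 4; 4]; [:: 8; 8]; [:: 16; 16]; [:: 3; 3]; [:: 5; 5]; [:: 30; 30]; [:: 1; 2; 3]; [:: 1; 2; 3]];
   [:: [:: 1; 1]; [:: 2; 2]; [:: 4; 4]; [:: 4; 4]; [:: 8; 8]; [:: 16; 16]; [:: 3; 3]; [:: 3; 3]; [:: 5; 5]; [:: 30; 30]]].
Lemma base20 : sharp_base SA Y20 F20 4 6. Proof. by vm_compute. Qed.

Definition Y22 := [:: 1; 1; 2; 2; 4; 4; 8; 8; 8; 8; 16; 16; 16; 16; 3; 3; 5; 5; 30; 30; 30; 30].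
Definition F22 :=
  [:: [:: [:: 2; 4; 8; 16; 30]; [:: 8; 16; 3; 5; 30]; [:: 1; 2; 8; 16; 5; 30]; [:: 1; 4; 8; 16; 3; 30]];
   [:: [:: 1; 1]; [:: 2; 4; 8; 16; 30]; [:: 2; 4; 8; 16; 30]; [:: 8; 16; 3; 5; 30]; [:: 8; 16; 3; 5; 30]];
   [:: [:: 8; 8]; [:: 16; 16]; [:: 30; 30]; [:: 2; 4; 3; 5]; [:: 1; 2; 8; 16; 5; 30]; [:: 1; 4; 8; 16; 3; 30]];
   [:: [:: 8; 8]; [:: 16; 16]; [:: 30; 30]; [:: 1; 2; 3]; [:: 1; 4; 5]; [:: 2; 4; 8; 16; 30]; [:: 8; 16; 3; 5; 30]];
   [:: [:: 1; 1]; [:: 8; 8]; [:: 16; 16]; [:: 3; 3]; [:: 5; 5]; [:: 30; 30]; [:: 2; 4; 8; 16; 30]; [:: 2; 4; 8; 16; 30]];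
   [:: [:: 8; 8]; [:: 8; 8]; [:: 16; 16]; [:: 16; 16]; [:: 30; 30]; [:: 30; 30]; [:: 1; 2; 3]; [:: 1; 4; 5]; [:: 2; 4; 3; 5]];
   [:: [:: 4; 4]; [:: 8; 8]; [:: 8; 8]; [:: 16; 16]; [:: 16; 16]; [:: 5; 5]; [:: 30; 30]; [:: 30; 30]; [:: 1; 2; 3]; [:: 1; 2; 3]];
   [:: [:: 1; 1]; [:: 2; 2]; [:: 4; 4]; [:: 8; 8]; [:: 8; 8]; [:: 16; 16]; [:: 16; 16]; [:: 3; 3]; [:: 5; 5]; [:: 30; 30]; [:: 30; 30]]].
Lemma base22 : sharp_base SA Y22 F22 4 7. Proof. by vm_compute. Qed.

Definition Y26 := [:: 1; 1; 1; 1; 2; 2; 4; 4; 8; 8; 8; 8; 16; 16; 16; 16; 3; 3; 5; 5; 5; 5; 30; 30; 30; 30].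
Definition F26 :=
  [:: [:: [:: 1; 4; 5]; [:: 8; 16; 3; 5; 30]; [:: 1; 2; 8; 16; 5; 30]; [:: 1; 2; 8; 16; 5; 30]; [:: 1; 4; 8; 16; 3; 30]];
   [:: [:: 1; 1]; [:: 1; 4; 5]; [:: 2; 4; 8; 16; 30]; [:: 8; 16; 3; 5; 30]; [:: 8; 16; 3; 5; 30]; [:: 1; 2; 8; 16; 5; 30]];
   [:: [:: 1; 1]; [:: 1; 1]; [:: 5; 5]; [:: 2; 4; 8; 16; 30]; [:: 2; 4; 8; 16; 30]; [:: 8; 16; 3; 5; 30]; [:: 8; 16; 3; 5; 30]];
   [:: [:: 8; 8]; [:: 16; 16]; [:: 30; 30]; [:: 1; 2; 3]; [:: 1; 4; 5]; [:: 1; 4; 5]; [:: 8; 16; 3; 5; 30]; [:: 1; 2; 8; 16; 5; 30]];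
   [:: [:: 1; 1]; [:: 8; 8]; [:: 16; 16]; [:: 5; 5]; [:: 30; 30]; [:: 1; 2; 3]; [:: 1; 4; 5]; [:: 2; 4; 8; 16; 30]; [:: 8; 16; 3; 5; 30]];
   [:: [:: 1; 1]; [:: 1; 1]; [:: 8; 8]; [:: 16; 16]; [:: 3; 3]; [:: 5; 5]; [:: 5; 5]; [:: 30; 30]; [:: 2; 4; 8; 16; 30]; [:: 2; 4; 8; 16; 30]];
   [:: [:: 8; 8]; [:: 8; 8]; [:: 16; 16]; [:: 16; 16]; [:: 5; 5]; [:: 30; 30]; [:: 30; 30]; [:: 1; 2; 3]; [:: 1; 2; 3]; [:: 1; 4; 5]; [:: 1; 4; 5]];
   [:: [:: 1; 1]; [:: 4; 4]; [:: 8; 8]; [:: 8; 8]; [:: 16; 16]; [:: 16; 16]; [:: 5; 5]; [:: 5; 5]; [:: 30; 30]; [:: 30; 30]; [:: 1; 2; 3]; [:: 1; 2; 3]];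
   [:: [:: 1; 1]; [:: 1; 1]; [:: 2; 2]; [:: 4; 4]; [:: 8; 8]; [:: 8; 8]; [:: 16; 16]; [:: 16; 16]; [:: 3; 3]; [:: 5; 5]; [:: 5; 5]; [:: 30; 30]; [:: 30; 30]]].
Lemma base26 : sharp_base SA Y26 F26 5 8. Proof. by vm_compute. Qed.

Definition Be24 := [:: 2; 2; 4; 4; 3; 3; 5; 5].
Definition Fe24 :=
  [:: [:: [:: 2; 4; 3; 5]; [:: 2; 4; 3; 5]];
   [:: [:: 2; 2]; [:: 4; 4]; [:: 3; 3]; [:: 5; 5]]].
Lemma data_e24 : exact_data SA VA Be24 Fe24. Proof. by vm_compute. Qed.

Definition Be25 := [:: 2; 2; 4; 4; 8; 8; 16; 16; 30; 30].
Definition Fe25 :=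
  [:: [:: [:: 2; 4; 8; 16; 30]; [:: 2; 4; 8; 16; 30]];
   [:: [:: 2; 2]; [:: 4; 4]; [:: 8; 8]; [:: 16; 16]; [:: 30; 30]]].
Lemma data_e25 : exact_data SA VA Be25 Fe25. Proof. by vm_compute. Qed.

Definition Be26 := [:: 1; 1; 4; 4; 8; 8; 16; 16; 3; 3; 30; 30].
Definition Fe26 :=
  [:: [:: [:: 1; 4; 8; 16; 3; 30]; [:: 1; 4; 8; 16; 3; 30]];
   [:: [:: 1; 1]; [:: 4; 4]; [:: 8; 8]; [:: 16; 16]; [:: 3; 3]; [:: 30; 30]]].
Lemma data_e26 : exact_data SA VA Be26 Fe26. Proof. by vm_compute. Qed.

Definition Be235 := [:: 1; 1; 2; 4; 8; 8; 16; 16; 3; 5; 30; 30].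
Definition Fe235 :=
  [:: [:: [:: 1; 2; 8; 16; 5; 30]; [:: 1; 4; 8; 16; 3; 30]];
   [:: [:: 1; 1]; [:: 2; 4; 8; 16; 30]; [:: 8; 16; 3; 5; 30]];
   [:: [:: 8; 8]; [:: 16; 16]; [:: 30; 30]; [:: 1; 2; 3]; [:: 1; 4; 5]]].
Lemma data_e235 : exact_data SA VA Be235 Fe235. Proof. by vm_compute. Qed.

Definition Be245 := [:: 1; 2; 4; 8; 8; 16; 16; 7; 11; 11; 21; 21].
Definition Fe245 :=
  [:: [:: [:: 1; 8; 16; 7; 11; 21]; [:: 2; 4; 8; 16; 11; 21]];
   [:: [:: 16; 16]; [:: 21; 21]; [:: 1; 2; 8; 11]; [:: 4; 8; 7; 11]];
   [:: [:: 8; 8]; [:: 16; 16]; [:: 11; 11]; [:: 21; 21]; [:: 1; 2; 4; 7]]].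
Lemma data_e245 : exact_data SB VB Be245 Fe245. Proof. by vm_compute. Qed.

Definition Bi24 := [:: 1; 1; 2; 4; 8; 8; 3; 5; 14; 14].
Definition Fi24 :=
  [:: [:: [:: 1; 2; 8; 5; 14]; [:: 1; 4; 8; 3; 14]];
   [:: [:: 1; 1]; [:: 2; 4; 8; 14]; [:: 8; 3; 5; 14]];
   [:: [:: 8; 8]; [:: 14; 14]; [:: 1; 2; 3]; [:: 1; 4; 5]]].
Lemma data_i24 : exact_data SC VC Bi24 Fi24. Proof. by vm_compute. Qed.

Definition Bi35 := [:: 2; 2; 4; 4; 8; 16; 3; 3; 3; 5; 5; 5; 30].
Definition Fi35 :=
  [:: [:: [:: 2; 4; 3; 5]; [:: 2; 4; 3; 5]; [:: 8; 16; 3; 5; 30]];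
   [:: [:: 3; 3]; [:: 5; 5]; [:: 2; 4; 3; 5]; [:: 2; 4; 8; 16; 30]];
   [:: [:: 2; 2]; [:: 4; 4]; [:: 3; 3]; [:: 5; 5]; [:: 8; 16; 3; 5; 30]]].
Lemma data_i35 : exact_data SA VA Bi35 Fi35. Proof. by vm_compute. Qed.

Lemma shifted7 z : Lset (fun k => z + 2 <= k <= z + 2 + 1).
Proof. exact: shifted_family catalogue_A sizes_A base7. Qed.
Lemma shifted13 z : Lset (fun k => z + 3 <= k <= z + 3 + 3).
Proof. exact: shifted_family catalogue_C sizes_C base13. Qed.
Lemma shifted14 z : Lset (fun k => z + 3 <= k <= z + 3 + 4).
Proof. exact: shifted_family catalogue_C sizes_C base14. Qed.
Lemma shifted19 z : Lset (fun k => z + 4 <= k <= z + 4 + 5).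
Proof. exact: shifted_family catalogue_A sizes_A base19. Qed.

Lemma pumped16 z j : Lset (fun k => z + 2 * j + 3 <= k <= z + 6 * j + 3 + 5).
Proof. exact: pumped_family catalogue_A sizes_A pump_A base16 isT. Qed.
Lemma pumped20 z j : Lset (fun k => z + 2 * j + 4 <= k <= z + 6 * j + 4 + 6).
Proof. exact: pumped_family catalogue_A sizes_A pump_A base20 isT. Qed.
Lemma pumped22 z j : Lset (fun k => z + 2 * j + 4 <= k <= z + 6 * j + 4 + 7).
Proof. exact: pumped_family catalogue_A sizes_A pump_A base22 isT. Qed.
Lemma pumped26 z j : Lset (fun k => z + 2 * j + 5 <= k <= z + 6 * j + 5 + 8).
Proof. exact: pumped_family catalogue_A sizes_A pump_A base26 isT. Qed.

Lemma L24 : Lset (fun k => k = 2 \/ k = 4).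
Proof.
apply: Lset_equiv (exact_system catalogue_A data_e24) _ => k.
by rewrite /= !inE; split; lia.
Qed.
Lemma L25 : Lset (fun k => k = 2 \/ k = 5).
Proof.
apply: Lset_equiv (exact_system catalogue_A data_e25) _ => k.
by rewrite /= !inE; split; lia.
Qed.
Lemma L26 : Lset (fun k => k = 2 \/ k = 6).
Proof.
apply: Lset_equiv (exact_system catalogue_A data_e26) _ => k.
by rewrite /= !inE; split; lia.
Qed.
Lemma L235 : Lset (fun k => [\/ k = 2, k = 3 | k = 5]).
Proof.
apply: Lset_equiv (exact_system catalogue_A data_e235) _ => k; rewrite /= !inE.
by split => [/or3P [] /eqP|[] ->] //; [constructor 1 | constructor 2 | constructor 3].
Qed.
Lemma L245 : Lset (fun k => [\/ k = 2, k = 4 | k = 5]).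
Proof.
apply: Lset_equiv (exact_system catalogue_B data_e245) _ => k; rewrite /= !inE.
by split => [/or3P [] /eqP|[] ->] //; [constructor 1 | constructor 2 | constructor 3].
Qed.
Lemma L2to4 : Lset (fun k => 2 <= k <= 4).
Proof.
apply: Lset_equiv (exact_system catalogue_C data_i24) _ => k.
by rewrite /= !inE; split; lia.
Qed.
Lemma L3to5 : Lset (fun k => 3 <= k <= 5).
Proof.
apply: Lset_equiv (exact_system catalogue_A data_i35) _ => k.
by rewrite /= !inE; split; lia.
Qed.

Theorem lemma3p2 :
  (* part 1 *)
  (Lset (fun k => 2 <= k <= 3) /\ Lset (fun k => 2 <= k <= 4) /\
   Lset (fun k => 3 <= k <= 6) /\ Lset (fun k => 3 <= k <= 7) /\
   Lset (fun k => 4 <= k <= 9) /\ Lset (fun k => 4 <= k <= 10) /\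
   Lset (fun k => 4 <= k <= 11) /\
   Lset (fun k => k = 2 \/ k = 4) /\ Lset (fun k => k = 2 \/ k = 5) /\
   Lset (fun k => k = 2 \/ k = 6) /\ Lset (fun k => [\/ k = 2, k = 3 | k = 5]) /\
   Lset (fun k => [\/ k = 2, k = 4 | k = 5])) /\
  (* part 2 *)
  (forall n : nat, 2 <= n ->
     [/\ Lset (fun k => 2 * n <= k <= 6 * n - 4), Lset (fun k => 2 * n <= k <= 6 * n - 3),
         Lset (fun k => 2 * n <= k <= 6 * n - 2) & Lset (fun k => 2 * n <= k <= 6 * n - 1)]) /\
  (* part 3 *)
  (forall n : nat, 1 <= n ->
     [/\ Lset (fun k => 2 * n + 1 <= k <= 6 * n - 2), Lset (fun k => 2 * n + 1 <= k <= 6 * n - 1),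
         Lset (fun k => 2 * n + 1 <= k <= 6 * n) & Lset (fun k => 2 * n + 1 <= k <= 6 * n + 1)]).
Proof.
split; [|split].
- exact: (conj (shifted7 0) (conj L2to4 (conj (shifted13 0) (conj (shifted14 0)
    (conj (shifted19 0) (conj (pumped20 0 0) (conj (pumped22 0 0)
    (conj L24 (conj L25 (conj L26 (conj L235 L245))))))))))).
- case=> [|[|m]] // _; split.
  + case: m => [|m]; first exact: (shifted14 1).
    by eapply Lset_interval; last exact: (pumped26 1 m); lia.
  + by eapply Lset_interval; last exact: (pumped16 1 m); lia.
  + by eapply Lset_interval; last exact: (pumped20 0 m); lia.
  + by eapply Lset_interval; last exact: (pumped22 0 m); lia.
- case=> [|[|m]] // _; split.
  + exact: (shifted7 1).
  + exact: L3to5.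
  + exact: (shifted13 0).
  + exact: (shifted14 0).
  + by eapply Lset_interval; last exact: (pumped16 2 m); lia.
  + by eapply Lset_interval; last exact: (pumped20 1 m); lia.
  + by eapply Lset_interval; last exact: (pumped22 1 m); lia.
  + by eapply Lset_interval; last exact: (pumped26 0 m); lia.
Qed.
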